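(* Let $\mathbf G_*=(\partial:G_1\to G_0)$ be a crossed module. The homomorphism $\delta:G_1\to\mathbf Z_0(\mathbf G_* )$ together with the bracket $\{(x,\xi),(y,\eta)\}:=\xi(y)$ is a braided crossed module, whose associated crossed module (with action ${}^{(x,\xi)}a:=\{(x,\xi),\delta a\}\,a$) is the crossed module $\delta:G_1\to\mathbf Z_0(\mathbf G_* )$ with action ${}^{(x,\xi)}a={}^xa$. This braided crossed module is denoted $\mathbf Z_*(\mathbf G_* )$ and called the centre of $\mathbf G_*$.
   Context: A crossed module $\mathbf G_*$: groups $G_1,G_0$, a homomorphism $\partial:G_1\to G_0$ and a left action $(x,a)\mapsto{}^xa$ of $G_0$ on $G_1$ by automorphisms, with $\partial({}^x a)=x\partial(a)x^{-1}$ and ${}^{\partial(b)}a=bab^{-1}$. Commutators $[x,y]=xyx^{-1}y^{-1}$. A braided crossed module is a group homomorphism $\partial:H_1\to H_0$ with a map $\{-,-\}:H_0\times H_0\to H_1$ such that for all $x,y,z\in H_0$, $a,b\in H_1$: $\partial\{x,y\}=[x,y]$; $\{\partial a,\partial b\}=[a,b]$; $\{\partial a,x\}=\{x,\partial a\}^{-1}$; $\{x,yz\}=\{x,y\}\{x,z\}\{zxz^{-1}x^{-1},y\}$; $\{xy,z\}=\{x,yzy^{-1}\}\{y,z\}$. $\mathbf Z_0(\mathbf G_* )$ is the set of pairs $(x,\xi)$, $x\in G_0$, $\xi:G_0\to G_1$ a map, with (Z1) $\partial\xi(t)=[x,t]$, (Z2) $\xi(\partial a)={}^xa\,a^{-1}$,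 (Z3) $\xi(st)=\xi(s)\,{}^s\xi(t)$ for all $s,t\in G_0$, $a\in G_1$; it is a group under $(x,\xi)(y,\eta)=(xy,\ t\mapsto{}^x\eta(t)\,\xi(t))$. $\delta(c)=(\partial c,\ t\mapsto c\,({}^tc)^{-1})$. *)

Set Implicit Arguments.

Record group := Group {
  gcar :> Type;
  gmul : gcar -> gcar -> gcar;
  ginv : gcar -> gcar;
  gone : gcar;
  gmulA : forall a b c, gmul a (gmul b c) = gmul (gmul a b) c;
  gmul1g : forall a, gmul gone a = a;
  gmulg1 : forall a, gmul a gone = a;
  gmulVg : forall a, gmul (ginv a) a = gone;
  gmulgV : forall a, gmul a (ginv a) = gone
}.
Arguments gmul {g}.
Arguments ginv {g}.
Arguments gone {g}.

Definition gcomm {G : group} (x y : G) : G :=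
  gmul (gmul (gmul x y) (ginv x)) (ginv y).

Definition is_group_on {T : Type} (P : T -> Prop)
  (mul : T -> T -> T) (inv : T -> T) (one : T) : Prop :=
  P one /\
  (forall a b, P a -> P b -> P (mul a b)) /\
  (forall a, P a -> P (inv a)) /\
  (forall a b c, P a -> P b -> P c -> mul a (mul b c) = mul (mul a b) c) /\
  (forall a, P a -> mul one a = a /\ mul a one = a) /\
  (forall a, P a -> mul (inv a) a = one /\ mul a (inv a) = one).

Definition commT {T : Type} (mul : T -> T -> T) (inv : T -> T) (x y : T) : T :=
  mul (mul (mul x y) (inv x)) (inv y).

(* Crossed module d : G1 -> H0, where H0 is the group (P0, mul0, inv0, one0)
   inside the type T0, with left action act of H0 on G1 by automorphisms. *)
Definition is_xmod_on (G1 : group) {T0 : Type} (P0 : T0 -> Prop)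
  (mul0 : T0 -> T0 -> T0) (inv0 : T0 -> T0) (one0 : T0)
  (d : G1 -> T0) (act : T0 -> G1 -> G1) : Prop :=
  is_group_on P0 mul0 inv0 one0 /\
  (forall a, P0 (d a)) /\
  (forall a b : G1, d (gmul a b) = mul0 (d a) (d b)) /\
  (forall a : G1, act one0 a = a) /\
  (forall x y a, P0 x -> P0 y -> act (mul0 x y) a = act x (act y a)) /\
  (forall x (a b : G1), P0 x -> act x (gmul a b) = gmul (act x a) (act x b)) /\
  (forall x a, P0 x -> d (act x a) = mul0 (mul0 x (d a)) (inv0 x)) /\
  (forall a b : G1, act (d b) a = gmul (gmul b a) (ginv b)).

Definition is_xmod (G1 G0 : group) (d : G1 -> G0) (act : G0 -> G1 -> G1) : Prop :=
  is_xmod_on G1 (fun _ : G0 => True) gmul ginv gone d act.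

Definition is_braided_xmod_on (H1 : group) {T0 : Type} (P0 : T0 -> Prop)
  (mul0 : T0 -> T0 -> T0) (inv0 : T0 -> T0) (one0 : T0)
  (d : H1 -> T0) (br : T0 -> T0 -> H1) : Prop :=
  is_group_on P0 mul0 inv0 one0 /\
  (forall a, P0 (d a)) /\
  (forall a b : H1, d (gmul a b) = mul0 (d a) (d b)) /\
  (forall x y, P0 x -> P0 y -> d (br x y) = commT mul0 inv0 x y) /\
  (forall a b : H1, br (d a) (d b) = gcomm a b) /\
  (forall x (a : H1), P0 x -> br (d a) x = ginv (br x (d a))) /\
  (forall x y z, P0 x -> P0 y -> P0 z ->
     br x (mul0 y z) =
     gmul (gmul (br x y) (br x z)) (br (commT mul0 inv0 z x) y)) /\
  (forall x y z, P0 x -> P0 y -> P0 z ->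
     br (mul0 x y) z = gmul (br x (mul0 (mul0 y z) (inv0 y))) (br y z)).

(* The group Z_0 of the crossed module G : pairs (x, xi) with xi : G0 -> G1 satisfying (Z1)-(Z3). *)
Section Centre.
Variables (G1 G0 : group) (bd : G1 -> G0) (act : G0 -> G1 -> G1).

Definition Z0T : Type := (G0 * (G0 -> G1))%type.

Definition inZ0 (p : Z0T) : Prop :=
  let (x, xi) := p in
  (forall t, bd (xi t) = gcomm x t) /\
  (forall a, xi (bd a) = gmul (act x a) (ginv a)) /\
  (forall s t, xi (gmul s t) = gmul (xi s) (act s (xi t))).

Definition zmul (p q : Z0T) : Z0T :=
  let (x, xi) := p in let (y, eta) := q in
  (gmul x y, fun t => gmul (act x (eta t)) (xi t)).

Definition zinv (p : Z0T) : Z0T :=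
  let (x, xi) := p in (ginv x, fun t => act (ginv x) (ginv (xi t))).

Definition zone : Z0T := (gone, fun _ => gone).

Definition zdelta (c : G1) : Z0T := (bd c, fun t => gmul c (ginv (act t c))).

Definition zbr (p q : Z0T) : G1 := (snd p) (fst q).

Definition zact (p : Z0T) (a : G1) : G1 := act (fst p) a.

End Centre.
Arguments zdelta {G1 G0}.

From Stdlib Require Import FunctionalExtensionality.

(* Write x.a for the action of x in G0 on a in G1.
   Everything rests on one computation.  For (x,xi) in Z_0, axiom (Z1) says
   x t = bd (xi t) t x, i.e. conjugation by x agrees with t up to the
   correction bd (xi t); combining this with (Z2) and (Z3) yields the
   "swap formula"  xi (z t) = x.zeta(t) xi(t) t.xi(z) zeta(t)^-1  for any
   two elements (x,xi), (z,zeta) of Z_0.  From it we get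
   - p q = delta (xi y) q p  for p = (x,xi), q = (y,eta) in Z_0, so the
     commutator of p and q in Z_0 is delta {p,q};
   - xi(z) zeta(x) lies in Ker bd (hence is central) and is fixed by G0,
     which is exactly what the bracket axiom for {x, y z} needs;
   - delta (x.a) (x,xi) = (x,xi) delta a, i.e. delta is equivariant. *)

Section GroupTheory.
Context {G : group}.
Implicit Types a b c : G.
Local Notation "a * b" := (gmul a b).
Local Notation "a ^-1" := (ginv a) (at level 2, left associativity, format "a ^-1").

Lemma gA a b c : a * b * c = a * (b * c).
Proof. symmetry; apply gmulA. Qed.

Lemma gKl a b : a^-1 * (a * b) = b.
Proof. rewrite gmulA, gmulVg, gmul1g; reflexivity. Qed.

Lemma gKr a b : a * (a^-1 * b) = b.
Proof. rewrite gmulA, gmulgV, gmul1g; reflexivity. Qed.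

Lemma gcancel a b c : a * b = a * c -> b = c.
Proof. intro H. rewrite <- (gKl a b), H, gKl. reflexivity. Qed.

Lemma ginvM a b : (a * b)^-1 = b^-1 * a^-1.
Proof. apply (gcancel (a * b)). rewrite gmulgV, gA, gKr, gmulgV. reflexivity. Qed.

Lemma ginvK a : a^-1^-1 = a.
Proof. apply (gcancel a^-1). rewrite gmulgV, gmulVg. reflexivity. Qed.

Lemma ginv1 : (@gone G)^-1 = gone.
Proof. rewrite <- (gmul1g _ gone^-1), gmulgV. reflexivity. Qed.

Lemma gidem a : a * a = a -> a = gone.
Proof. intro H. apply (gcancel a). rewrite H, gmulg1. reflexivity. Qed.

End GroupTheory.

(* Normal form: products associated to the right, cancellations performed. *)
Hint Rewrite @gA @gKl @gKr gmulVg gmulgV gmul1g gmulg1 @ginvM @ginvK @ginv1 : gs.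

Section Centre.
Variables (G1 G0 : group) (bd : G1 -> G0) (act : G0 -> G1 -> G1).
Hypothesis HG : is_xmod G1 G0 bd act.
Implicit Types (x y z s t : G0) (xi eta zeta : G0 -> G1) (a b c k : G1)
  (p q r : Z0T G1 G0).

Local Notation "a * b" := (gmul a b).
Local Notation "a ^-1" := (ginv a) (at level 2, left associativity, format "a ^-1").
Local Notation Z := (inZ0 bd act).
Local Notation zmul := (zmul act).
Local Notation zinv := (zinv act).
Local Notation zone := (zone G1 G0).
Local Notation delta := (zdelta bd act).

Lemma bdM a b : bd (a * b) = bd a * bd b.
Proof. destruct HG as (_ & _ & H & _). exact (H a b). Qed.

Lemma act1 a : act gone a = a.
Proof. destruct HG as (_ & _ & _ & H & _). exact (H a). Qed.

Lemma act_mulx x y a : act (x * y) a = act x (act y a).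
Proof. destruct HG as (_ & _ & _ & _ & H & _). exact (H x y a I I). Qed.

Lemma actM x a b : act x (a * b) = act x a * act x b.
Proof. destruct HG as (_ & _ & _ & _ & _ & H & _). exact (H x a b I). Qed.

Lemma bd_act x a : bd (act x a) = x * bd a * x^-1.
Proof. destruct HG as (_ & _ & _ & _ & _ & _ & H & _). exact (H x a I). Qed.

Lemma peiffer a b : act (bd b) a = b * a * b^-1.
Proof. destruct HG as (_ & _ & _ & _ & _ & _ & _ & H). exact (H a b). Qed.

Lemma bd1 : bd gone = gone.
Proof. apply gidem. rewrite <- bdM, gmul1g. reflexivity. Qed.

Lemma bdV a : bd a^-1 = (bd a)^-1.
Proof. apply (gcancel (bd a)). rewrite <- bdM, !gmulgV, bd1. reflexivity. Qed.

Lemma act_one x : act x gone = gone.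
Proof. apply gidem. rewrite <- actM, gmul1g. reflexivity. Qed.

Lemma actV x a : act x a^-1 = (act x a)^-1.
Proof. apply (gcancel (act x a)). rewrite <- actM, !gmulgV, act_one. reflexivity. Qed.

Hint Rewrite bdM act1 actM bd_act bd1 bdV act_one actV : gs.
Hint Rewrite <- act_mulx : gs.
Ltac gsimpl := autorewrite with gs.

Lemma ker_central k b : bd k = gone -> k * b = b * k.
Proof.
  intro Hk. pose proof (peiffer b k) as E. rewrite Hk, act1 in E.
  transitivity (k * b * k^-1 * k); [gsimpl; reflexivity | rewrite <- E; reflexivity].
Qed.

Lemma ker_act t {k} : bd k = gone -> bd (act t k) = gone.
Proof. intro Hk. rewrite bd_act, Hk. gsimpl. reflexivity. Qed.

Lemma Z0_comm {x xi} t : Z (x, xi) -> bd (xi t) = gcomm x t.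
Proof. intros (H & _). apply H. Qed.

Lemma Z0_bd {x xi} a : Z (x, xi) -> xi (bd a) = act x a * a^-1.
Proof. intros (_ & H & _). apply H. Qed.

Lemma Z0_cocycle {x xi} s t : Z (x, xi) -> xi (s * t) = xi s * act s (xi t).
Proof. intros (_ & _ & H). apply H. Qed.

Lemma Z0_twist {x xi} t : Z (x, xi) -> x * t = bd (xi t) * (t * x).
Proof. intro Hx. rewrite (Z0_comm t Hx). unfold gcomm. gsimpl. reflexivity. Qed.

Lemma Z0_conj {x xi} t : Z (x, xi) -> x * t * x^-1 = bd (xi t) * t.
Proof. intro Hx. rewrite (Z0_twist t Hx). gsimpl. reflexivity. Qed.

Lemma Z0_act_twist {x xi} t b : Z (x, xi) ->
  act (x * t) b = xi t * act (t * x) b * (xi t)^-1.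
Proof. intro Hx. rewrite (Z0_twist t Hx), act_mulx, peiffer. reflexivity. Qed.

Lemma Z0T_eq x xi y eta : x = y -> (forall t, xi t = eta t) -> (x, xi) = (y, eta).
Proof. intros -> E. f_equal. apply functional_extensionality, E. Qed.

Lemma zmulA p q r : zmul p (zmul q r) = zmul (zmul p q) r.
Proof.
  destruct p as [x xi], q as [y eta], r as [z zeta].
  apply Z0T_eq; intros; gsimpl; reflexivity.
Qed.

Lemma zmul1 p : zmul zone p = p /\ zmul p zone = p.
Proof. destruct p as [x xi]. split; apply Z0T_eq; intros; gsimpl; reflexivity. Qed.

Lemma zmulV p : zmul (zinv p) p = zone /\ zmul p (zinv p) = zone.
Proof. destruct p as [x xi]. split; apply Z0T_eq; intros; gsimpl; reflexivity. Qed.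

Lemma Z0_one : Z zone.
Proof. repeat split; intros; unfold gcomm; gsimpl; reflexivity. Qed.

Lemma Z0_mul p q : Z p -> Z q -> Z (zmul p q).
Proof.
  destruct p as [x xi], q as [y eta]. intros Hx Hy. repeat split.
  - intro t. rewrite bdM, bd_act, (Z0_comm t Hx), (Z0_comm t Hy).
    unfold gcomm. gsimpl. reflexivity.
  - intro a. rewrite (Z0_bd _ Hx), (Z0_bd _ Hy). gsimpl. reflexivity.
  - intros s t. rewrite (Z0_cocycle _ _ Hx), (Z0_cocycle _ _ Hy).
    rewrite actM, <- act_mulx, (Z0_act_twist s (eta t) Hx). gsimpl. reflexivity.
Qed.

Lemma Z0_inv p : Z p -> Z (zinv p).
Proof.
  destruct p as [x xi]. intro Hx. repeat split.
  - intro t. rewrite bd_act, bdV, (Z0_comm t Hx). unfold gcomm. gsimpl. reflexivity.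
  - intro a. rewrite (Z0_bd _ Hx). gsimpl. reflexivity.
  - intros s t. rewrite (Z0_cocycle _ _ Hx).
    (* the twist rule relates the actions of  s x^-1  and  x^-1 s *)
    assert (Hs : act (s * x^-1) (xi t) = act x^-1 (xi s * act s (xi t) * (xi s)^-1)).
    { transitivity (act x^-1 (act (x * s) (act x^-1 (xi t)))); [gsimpl; reflexivity|].
      rewrite (Z0_act_twist s _ Hx). gsimpl. reflexivity. }
    gsimpl. rewrite Hs. gsimpl. reflexivity.
Qed.

Lemma Z0_group : is_group_on Z zmul zinv zone.
Proof.
  refine (conj Z0_one (conj Z0_mul (conj Z0_inv (conj _ (conj _ _))))); intros.
  - apply zmulA.
  - apply zmul1.
  - apply zmulV.
Qed.

Lemma Z0_delta c : Z (delta c).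
Proof.
  repeat split; intros; unfold gcomm; rewrite ?peiffer; gsimpl; reflexivity.
Qed.

Lemma zdeltaM a b : delta (a * b) = zmul (delta a) (delta b).
Proof. apply Z0T_eq; intros; rewrite ?peiffer; gsimpl; reflexivity. Qed.

Lemma xi_conj {x xi y eta} t : Z (x, xi) -> Z (y, eta) ->
  xi (y * t * y^-1) = act x (eta t) * xi t * (eta t)^-1.
Proof.
  intros Hx Hy. rewrite (Z0_conj t Hy), (Z0_cocycle _ _ Hx), (Z0_bd _ Hx), peiffer.
  gsimpl. reflexivity.
Qed.

Lemma xi_swap {x xi z zeta} t : Z (x, xi) -> Z (z, zeta) ->
  xi (z * t) = act x (zeta t) * xi t * act t (xi z) * (zeta t)^-1.
Proof.
  intros Hx Hz.
  assert (Hzt : z * t = z * t * z^-1 * z) by (gsimpl; reflexivity).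
  rewrite Hzt, (Z0_cocycle _ _ Hx), (xi_conj t Hx Hz), (Z0_conj t Hz), act_mulx, peiffer.
  gsimpl. reflexivity.
Qed.

Lemma zswap {p q} : Z p -> Z q -> zmul p q = zmul (delta (zbr p q)) (zmul q p).
Proof.
  destruct p as [x xi], q as [y eta]. intros Hx Hy. unfold zbr; simpl.
  apply Z0T_eq.
  - rewrite (Z0_twist y Hx). reflexivity.
  - intro t. rewrite peiffer. gsimpl.
    rewrite gmulA, <- (Z0_cocycle _ _ Hx), (xi_swap t Hx Hy). gsimpl. reflexivity.
Qed.

Lemma zcomm {p q} : Z p -> Z q -> commT zmul zinv p q = delta (zbr p q).
Proof.
  intros Hp Hq. unfold commT. rewrite (zswap Hp Hq).
  rewrite <- !zmulA, (zmulA p), (proj2 (zmulV p)), (proj1 (zmul1 _)), (proj2 (zmulV q)).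
  apply zmul1.
Qed.

Lemma Z0_bracket_ker {x xi z zeta} : Z (x, xi) -> Z (z, zeta) ->
  bd (zeta x * xi z) = gone.
Proof.
  intros Hx Hz. rewrite bdM, (Z0_comm _ Hx), (Z0_comm _ Hz). unfold gcomm.
  gsimpl. reflexivity.
Qed.

Lemma Z0_bracket_relation {x xi z zeta} t : Z (x, xi) -> Z (z, zeta) ->
  zeta x * xi z * act z (xi t) = act z (xi t) * zeta t * act t (zeta x * xi z) * (zeta t)^-1.
Proof.
  intros Hx Hz.
  pose proof (xi_swap t Hx Hz) as E1. pose proof (xi_swap t Hz Hx) as E2.
  rewrite (Z0_cocycle _ _ Hx) in E1. rewrite (Z0_cocycle _ _ Hz) in E2.
  assert (E2' : act x (zeta t)
                = (zeta x)^-1 * act z (xi t) * zeta t * act t (zeta x) * (xi t)^-1).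
  { apply (gcancel (zeta x)). rewrite E2. gsimpl. reflexivity. }
  rewrite E2' in E1. rewrite gA, E1. gsimpl. reflexivity.
Qed.

Lemma Z0_bracket_invariant {x xi z zeta} t : Z (x, xi) -> Z (z, zeta) ->
  act t (xi z * zeta x) = xi z * zeta x.
Proof.
  intros Hx Hz. pose proof (Z0_bracket_ker Hx Hz) as Hk.
  assert (Hxz : xi z * zeta x = zeta x * xi z).
  { apply (gcancel (zeta x)). rewrite <- gA, (ker_central _ _ Hk). reflexivity. }
  rewrite Hxz. symmetry. apply (gcancel (act z (xi t))).
  rewrite <- (ker_central _ _ Hk), (Z0_bracket_relation t Hx Hz).
  rewrite gA, (ker_central _ _ (ker_act t Hk)). gsimpl. reflexivity.
Qed.

Lemma zbr_delta_delta a b : zbr (delta a) (delta b) = gcomm a b.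
Proof. unfold zbr, zdelta, gcomm; simpl. rewrite peiffer. gsimpl. reflexivity. Qed.

Lemma zbr_delta_l p a : Z p -> zbr (delta a) p = (zbr p (delta a))^-1.
Proof.
  destruct p as [x xi]. intro Hx. unfold zbr; simpl. rewrite (Z0_bd _ Hx).
  gsimpl. reflexivity.
Qed.

Lemma zbr_mul_r p q r : Z p -> Z q -> Z r ->
  zbr p (zmul q r) = zbr p q * zbr p r * zbr (commT zmul zinv r p) q.
Proof.
  intros Hp Hq Hr. rewrite (zcomm Hr Hp).
  destruct p as [x xi], q as [y eta], r as [z zeta]. unfold zbr; simpl.
  rewrite (Z0_cocycle _ _ Hp).
  transitivity (xi y * act y (xi z * zeta x) * (act y (zeta x))^-1); [gsimpl; reflexivity|].
  rewrite (Z0_bracket_invariant y Hp Hr). gsimpl. reflexivity.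
Qed.

Lemma zbr_mul_l p q r : Z p -> Z q -> Z r ->
  zbr (zmul p q) r = zbr p (zmul (zmul q r) (zinv q)) * zbr q r.
Proof.
  destruct p as [x xi], q as [y eta], r as [z zeta]. intros Hx Hy _.
  unfold zbr; simpl.
  assert (Hyz : y * (z * y^-1) = y * z * y^-1) by (gsimpl; reflexivity).
  rewrite gA, Hyz, (xi_conj z Hx Hy). gsimpl. reflexivity.
Qed.

Lemma Z_braided :
  is_braided_xmod_on G1 Z zmul zinv zone delta (@zbr G1 G0).
Proof.
  refine (conj Z0_group (conj Z0_delta (conj zdeltaM (conj _ (conj _ (conj _ (conj _ _))))))).
  - intros p q Hp Hq. symmetry. apply zcomm; assumption.
  - apply zbr_delta_delta.
  - intros p a Hp. apply zbr_delta_l, Hp.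
  - intros p q r. apply zbr_mul_r.
  - intros p q r Hp Hq Hr. apply zbr_mul_l; assumption.
Qed.

Lemma zbr_delta_r p a : Z p -> zbr p (delta a) * a = zact act p a.
Proof.
  destruct p as [x xi]. intro Hx. unfold zbr, zact; simpl. rewrite (Z0_bd _ Hx).
  gsimpl. reflexivity.
Qed.

Lemma zdelta_act_swap {p} a : Z p -> zmul (delta (zact act p a)) p = zmul p (delta a).
Proof.
  destruct p as [x xi]. intro Hx. unfold zact; simpl. apply Z0T_eq.
  - rewrite bd_act. gsimpl. reflexivity.
  - intro t. rewrite peiffer. gsimpl. rewrite (Z0_act_twist t a Hx). gsimpl. reflexivity.
Qed.

Lemma zdelta_act p a : Z p -> delta (zact act p a) = zmul (zmul p (delta a)) (zinv p).
Proof.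
  intro Hp. rewrite <- (zdelta_act_swap a Hp), <- zmulA, (proj2 (zmulV p)).
  symmetry. apply zmul1.
Qed.

Lemma Z_xmod : is_xmod_on G1 Z zmul zinv zone delta (zact act).
Proof.
  refine (conj Z0_group (conj Z0_delta (conj zdeltaM (conj _ (conj _ (conj _ (conj _ _))))))).
  - intro a. apply act1.
  - intros [x xi] [y eta] a _ _. apply act_mulx.
  - intros [x xi] a b _. apply actM.
  - intros p a Hp. apply zdelta_act, Hp.
  - intros a b. apply peiffer.
Qed.

End Centre.

Theorem corollary3p8 (G1 G0 : group) (bd : G1 -> G0) (act : G0 -> G1 -> G1)
  (HG : is_xmod G1 G0 bd act) :
  is_braided_xmod_on G1 (inZ0 bd act) (zmul act) (zinv act) (zone G1 G0)
    (zdelta bd act) (@zbr G1 G0) /\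
  (forall (z : Z0T G1 G0) (a : G1), inZ0 bd act z ->
     gmul (zbr z (zdelta bd act a)) a = zact act z a) /\
  is_xmod_on G1 (inZ0 bd act) (zmul act) (zinv act) (zone G1 G0)
    (zdelta bd act) (zact act).
Proof.
  split; [|split].
  - apply Z_braided, HG.
  - intros z a Hz. apply zbr_delta_r; assumption.
  - apply Z_xmod, HG.
Qed.
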